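(* Let $s,t,r\in\mathbb{N}$ with $s\leqslant rt$ and $r\leqslant st$. The orbit space $V_{s,t,r}/U(r)$ (with the quotient topology) is homeomorphic to $\mathcal{C}_{s,t,r}$ (with the subspace topology from $\mathbb{C}^{st\times st}$).
   Context: $V_{s,t,r}$ is the set of matrices $V=[A_1;A_2;\dots;A_r]\in\mathbb{C}^{rt\times s}$ (vertical stacking of blocks $A_i\in\mathbb{C}^{t\times s}$) such that $V^{\ast}V=\sum_iA_i^{\ast}A_i=I$ and $A_1,\dots,A_r$ are linearly independent over $\mathbb{C}$. The unitary group $U(r)$ acts on $V_{s,t,r}$ by $U\cdot V=(U\otimes I_t)V$, and $V_{s,t,r}/U(r)$ is the set of orbits. $\mathcal{C}_{s,t,r}$ is the set of positive semi-definite $C_{AB}\in\mathbb{C}^{st\times st}$ on $\mathbb{C}^s\otimes\mathbb{C}^t$ of rank $r$ with $\mathrm{tr}_BC_{AB}=\frac1sI$. *)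

From HB Require Import structures.
From mathcomp Require Import all_boot all_order all_algebra.
From mathcomp Require Import all_classical all_reals all_analysis.
From mathcomp.real_closed Require Import complex.
Import numFieldNormedType.Exports.

Unset Printing Implicit Defensive.

Import Order.TTheory GRing.Theory Num.Theory.
Local Open Scope ring_scope.
Local Open Scope classical_set_scope.
Local Open Scope quotient_scope.

(* The complex numbers R[i] (R a real type, e.g. the reals) carry the
   topology of their modulus |z| (standard metric topology of C). *)
HB.instance Definition _ (R : realType) :=
  NormedModule.copy (R[i]) (R[i])^o.

Section Defs.
Variable R : realType.
Local Notation C := (R[i]).

Definition adj_mx m n (A : 'M[C]_(m, n)) : 'M[C]_(n, m) :=
  (map_mx (@conjc R) A)^T.

(* Kronecker product A (x) B, with the index pair (i, a) of 'I_m * 'I_p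
   identified with mxvec_index i a (value i * p + a). *)
Definition kron_mx m n p q (A : 'M[C]_(m, n)) (B : 'M[C]_(p, q))
  : 'M[C]_(m * p, n * q) :=
  \matrix_(k, l) \sum_(i < m) \sum_(a < p) \sum_(j < n) \sum_(b < q)
     ((k == mxvec_index i a) && (l == mxvec_index j b))%:R * (A i j * B a b).

(* i-th t x s block A_i of V = [A_1; ...; A_r] *)
Definition blk r t s (V : 'M[C]_(r * t, s)) (i : 'I_r) : 'M[C]_(t, s) :=
  \matrix_(a, b) V (mxvec_index i a) b.

Definition lin_indep_blocks r t s (V : 'M[C]_(r * t, s)) : Prop :=
  forall c : 'I_r -> C,
    \sum_(i < r) c i *: blk r t s V i = 0 -> forall i, c i = 0.

Definition Vset s t r : set 'M[C]_(r * t, s) :=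
  [set V | adj_mx (r * t) s V *m V = 1%:M /\ lin_indep_blocks r t s V].

Definition unitary_mx r (U : 'M[C]_r) : Prop := adj_mx r r U *m U = 1%:M.

Definition uact r t s (U : 'M[C]_r) (V : 'M[C]_(r * t, s)) : 'M[C]_(r * t, s) :=
  kron_mx r r t t U (1%:M : 'M[C]_t) *m V.

Definition Vsp s t r : topologicalType := set_type (Vset s t r).

Definition orbit s t r (V : Vsp s t r) : set (Vsp s t r) :=
  [set W | exists U : 'M[C]_r, unitary_mx r U /\ set_val W = uact r t s U (set_val V)].

Definition same_orbit s t r : rel (Vsp s t r) :=
  fun V W => `[< orbit s t r V = orbit s t r W >].

Lemma same_orbit_refl s t r : reflexive (@same_orbit s t r).
Proof. by move=> V; apply/asboolP. Qed.
Lemma same_orbit_sym s t r : symmetric (@same_orbit s t r).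
Proof.
by move=> V W; apply/asboolP/asboolP => ->.
Qed.
Lemma same_orbit_trans s t r : transitive (@same_orbit s t r).
Proof. by move=> W V X /asboolP H1 /asboolP H2; apply/asboolP; rewrite H1 H2. Qed.

Canonical same_orbit_equiv s t r :=
  EquivRel (@same_orbit s t r) (@same_orbit_refl s t r)
    (@same_orbit_sym s t r) (@same_orbit_trans s t r).

Definition orbit_space s t r : topologicalType :=
  quotient_topology {eq_quot (same_orbit_equiv s t r)}.

Definition psd_mx n (M : 'M[C]_n) : Prop :=
  adj_mx n n M = M /\ forall v : 'cV[C]_n, 0 <= (adj_mx n 1 v *m M *m v) 0 0.

Definition ptraceB s t (M : 'M[C]_(s * t)) : 'M[C]_s :=
  \matrix_(x, y) \sum_(a < t) M (mxvec_index x a) (mxvec_index y a).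

Definition Cset s t r : set 'M[C]_(s * t) :=
  [set M | psd_mx (s * t) M /\ \rank M = r /\ ptraceB s t M = (s%:R)^-1%:M].

Definition Csp s t r : topologicalType := set_type (Cset s t r).

End Defs.

Definition homeomorphic (X Y : topologicalType) : Prop :=
  exists (f : X -> Y) (g : Y -> X),
    [/\ cancel f g, cancel g f, continuous f & continuous g].

(** The map [V |-> choi V := s^-1 K K^*], where the columns of the (s t) x r
    matrix [K = kraus_mx V] are the vectorised [A_k^*], is continuous and
    constant on U(r)-orbits since [kraus_mx (U . V) = K U^*].  It lands in
    C_{s,t,r}: tr_B K K^* = V^* V = I and rank K = r by linear independence
    of the blocks.  It separates orbits, because two full-column-rank factors
    of the same Gram matrix K K^* differ by a unitary, and it is onto, because
    a positive semidefinite matrix of rank r is some K K^* with K of rank r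
    (spectral theorem and Gram-Schmidt).  So it induces a continuous bijection
    from the orbit space onto C_{s,t,r}.  The inverse is continuous because
    V_{s,t,r} is the full preimage of C_{s,t,r} inside the compact set of
    isometries {X | X^* X = I}, on which [choi] is a closed map. *)

From Pilot Require Import Defs.
From HB Require Import structures.
From mathcomp Require Import all_boot all_order all_algebra.
From mathcomp Require Import all_classical all_reals all_analysis.
From mathcomp.real_closed Require Import complex.
From mathcomp Require Import lra zify.

Set Implicit Arguments.
Unset Strict Implicit.
Unset Printing Implicit Defensive.

Import Order.TTheory GRing.Theory Num.Theory numFieldNormedType.Exports.
Local Open Scope complex_scope.
Local Open Scope ring_scope.
Local Open Scope sesquilinear_scope.
Local Open Scope classical_set_scope.
Local Open Scope quotient_scope.

Lemma eq_mx_nrows0 (T : Type) m n (A B : 'M[T]_(m, n)) : m = 0%N -> A = B.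
Proof. by move=> m0; apply/matrixP => i; have := ltn_ord i; rewrite {2}m0. Qed.

Lemma eq_mx_ncols0 (T : Type) m n (A B : 'M[T]_(m, n)) : n = 0%N -> A = B.
Proof. by move=> n0; apply: trmx_inj; exact: eq_mx_nrows0. Qed.

Lemma row_freeP (F : fieldType) m n (A : 'M[F]_(m, n)) :
  reflect (forall u : 'rV_m, u *m A = 0 -> u = 0) (row_free A).
Proof.
apply: (iffP idP) => [freeA u /eqP | uA0].
  by rewrite mulmx_free_eq0 // => /eqP.
rewrite -kermx_eq0; apply/eqP/row_matrixP => i; rewrite row0; apply: uA0.
by rewrite -row_mul mulmx_ker row0.
Qed.

Lemma mxvec_index_eq m n (i i' : 'I_m) (j j' : 'I_n) :
  (mxvec_index i j == mxvec_index i' j') = ((i, j) == (i', j')).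
Proof. by rewrite (inj_eq (@cast_ord_inj _ _ _)) (inj_eq enum_rank_inj). Qed.

Lemma sum_mxvec_index (V : nmodType) m n (F : 'I_(m * n) -> V) :
  \sum_(k < m * n) F k = \sum_(i < m) \sum_(j < n) F (mxvec_index i j).
Proof.
rewrite pair_big (reindex _ (onW_bij _ (onT_bij (curry_mxvec_bij m n)))).
by apply: eq_big => // -[].
Qed.

Section GramMatrix.
Variable C : numClosedFieldType.

Lemma trmxC_mul m n p (A : 'M[C]_(m, n)) (B : 'M[C]_(n, p)) :
  (A *m B)^t* = B^t* *m A^t*.
Proof. by rewrite trmx_mul map_mxM. Qed.

Lemma mxrank_trmxC m n (A : 'M[C]_(m, n)) : \rank (A^t* ) = \rank A.
Proof. by rewrite mxrank_map mxrank_tr. Qed.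

Lemma mulmx_trmxC_eq0 m n (A : 'M[C]_(m, n)) : A *m A^t* = 0 -> A = 0.
Proof.
move=> AA0; apply/matrixP => i j; rewrite mxE; apply/eqP.
have /eqP := congr1 (fun M : 'M[C]_m => M i i) AA0; rewrite !mxE psumr_eq0.
  by move=> /allP/(_ j (mem_index_enum _)); rewrite !mxE mul_conjC_eq0.
by move=> k _; rewrite !mxE mul_conjC_ge0.
Qed.

Lemma mxrank_mulmx_trmxC m n (A : 'M[C]_(m, n)) : \rank (A *m A^t* ) = \rank A.
Proof.
have kerE : (kermx (A *m A^t* ) :=: kermx A)%MS.
  apply/eqmxP/andP; split; apply/sub_kermxP; last first.
    by rewrite mulmxA mulmx_ker mul0mx.
  apply: mulmx_trmxC_eq0.
  by rewrite trmxC_mul mulmxA -(mulmxA _ A) mulmx_ker mul0mx.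
have := mxrank_ker (A *m A^t* ); rewrite kerE mxrank_ker.
have := rank_leq_row A; have := rank_leq_row (A *m A^t* ); lia.
Qed.

Lemma trmxC_mul_unit m k (Z : 'M[C]_(m, k)) : \rank Z = k -> Z^t* *m Z \in unitmx.
Proof.
move=> rkZ; rewrite -row_free_unit /row_free -[X in _ *m X]trmxCK.
by rewrite mxrank_mulmx_trmxC mxrank_trmxC rkZ.
Qed.

Lemma unitary_factor_mulmx_trmxC m k (Z Z' : 'M[C]_(m, k)) :
  \rank Z = k -> \rank Z' = k -> Z *m Z^t* = Z' *m Z'^t* ->
  exists2 U : 'M[C]_k, U \is unitarymx & Z' = Z *m U.
Proof.
move=> rkZ rkZ' ZZ'; have uG := trmxC_mul_unit rkZ; have uG' := trmxC_mul_unit rkZ'.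
set G := Z^t* *m Z in uG; set G' := Z'^t* *m Z' in uG'.
pose U := Z^t* *m Z' *m invmx G'.
have ZU : Z *m U = Z'.
  by rewrite /U !mulmxA ZZ' -(mulmxA Z') -/G' mulmxK.
exists U => //; apply/unitarymxP.
(* [G U U^* G = Z^* Z' Z'^* Z = Z^* Z Z^* Z = G G] with [G] invertible. *)
have GUG : G *m (U *m U^t* ) *m G = G *m G.
  rewrite mulmxA /G -(mulmxA _ Z U) ZU mulmxA -(mulmxA _ (U^t* )) -trmxC_mul ZU.
  by rewrite -(mulmxA _ Z') -ZZ' !mulmxA.
move/(canRL (mulmxK uG)): GUG; rewrite mulmxK // => /(congr1 (mulmx (invmx G))).
by rewrite mulKmx // mulVmx.
Qed.

Lemma mulmx_trmxC_factor m n k (A : 'M[C]_(m, n)) :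
  \rank A = k -> exists Z : 'M[C]_(m, k), A *m A^t* = Z *m Z^t*.
Proof.
move=> <-; pose S := schmidt (row_base A).
have /submxP[Z AZS] : (A <= S)%MS.
  by rewrite eqmx_schmidt_free ?row_base_free // eq_row_base.
exists Z; rewrite [in LHS]AZS trmxC_mul mulmxA mulmxtVK //.
exact/schmidt_unitarymx/rank_leq_col.
Qed.

End GramMatrix.

Section PsdMatrix.
Variable R : realType.
Local Notation C := R[i].

Lemma adj_mxE m n (A : 'M[C]_(m, n)) : adj_mx R m n A = A^t*.
Proof. by rewrite /adj_mx map_trmx. Qed.

Lemma psd_mx_factor n (M : 'M[C]_n) : psd_mx R n M -> exists Z : 'M[C]_n, M = Z *m Z^t*.
Proof.
rewrite /psd_mx adj_mxE => -[M_herm M_ge0].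
have /orthomx_spectralP : M \is normalmx by apply/normalmxP; rewrite M_herm.
have P_unitary := spectral_unitarymx M.
rewrite invmx_unitary //; set P := spectralmx M; set d := spectral_diag M => eM.
have PMP : P *m M *m P^t* = diag_mx d.
  by rewrite eM !mulmxA (unitarymxP P_unitary) mul1mx mulmxtVK.
have d_ge0 i : 0 <= d 0 i.
  have := M_ge0 (P^t* *m delta_mx i 0).
  rewrite !adj_mxE trmxC_mul trmxCK trmx_delta map_delta_mx !mulmxA.
  rewrite -(mulmxA _ P) -(mulmxA _ (P *m M)) PMP.
  by rewrite -rowE -colE !mxE eqxx mulr1n.
exists (P^t* *m diag_mx (\row_i sqrtC (d 0 i))).
rewrite trmxC_mul tr_diag_mx map_diag_mx trmxCK -mulmxA (mulmxA (diag_mx _)).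
rewrite mulmx_diag mulmxA {}eM; congr (_ *m diag_mx _ *m _); apply/rowP => i.
  by rewrite !mxE /= geC0_conj ?sqrtC_ge0 // -expr2 sqrtCK.
Qed.

Lemma psd_mx_scale_gram n k (a : C) (Z : 'M[C]_(n, k)) :
  0 <= a -> psd_mx R n (a *: (Z *m Z^t* )).
Proof.
move=> a_ge0; split.
  by rewrite adj_mxE linearZ /= map_mxZ /= geC0_conj // trmxC_mul trmxCK.
move=> v; rewrite adj_mxE -scalemxAr -scalemxAl mxE mulr_ge0 //.
rewrite !mulmxA -(mulmxA _ (Z^t* ) v) -{2}(trmxCK v) -trmxC_mul !mxE.
by apply: sumr_ge0 => j _; rewrite !mxE mul_conjC_ge0.
Qed.

End PsdMatrix.




HB.lock Definition kraus_mx (R : realType) r t s (V : 'M[R[i]]_(r * t, s)) :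
  'M[R[i]]_(s * t, r) := (\matrix_k mxvec ((blk R r t s V k)^t* ))^T.

Section Kraus.
Variable R : realType.
Local Notation C := R[i].

Lemma kron_mxE m n p q (A : 'M[C]_(m, n)) (B : 'M[C]_(p, q)) i a j b :
  kron_mx R m n p q A B (mxvec_index i a) (mxvec_index j b) = A i j * B a b.
Proof.
rewrite mxE; under eq_bigr do under eq_bigr do rewrite pair_big /=.
rewrite pair_big pair_big (bigD1 ((i, a), (j, b))) //= !eqxx mul1r big1 ?addr0 //.
move=> -[[i' a'] [j' b']] /=; rewrite !mxvec_index_eq -xpair_eqE eq_sym.
by move=> /negbTE ->; rewrite mul0r.
Qed.

Lemma uactE r t s (U : 'M[C]_r) (V : 'M[C]_(r * t, s)) k a x :
  uact R r t s U V (mxvec_index k a) x = \sum_(l < r) U k l * V (mxvec_index l a) x.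
Proof.
rewrite mxE sum_mxvec_index; apply: eq_bigr => l _.
rewrite (bigD1 a) //= kron_mxE !mxE eqxx mulr1 big1 ?addr0 // => b.
by rewrite eq_sym kron_mxE !mxE => /negbTE ->; rewrite mulr0 mul0r.
Qed.

Lemma kraus_mxE r t s (V : 'M[C]_(r * t, s)) x a k :
  kraus_mx V (mxvec_index x a) k = (V (mxvec_index k a) x)^*.
Proof. by rewrite unlock !mxE mxvecE !mxE. Qed.

Lemma kraus_mxK r t s : cancel (@kraus_mx R r t s) (@kraus_mx R s t r).
Proof.
move=> V; apply/matrixP => + x; case/mxvec_indexP => k a.
by rewrite !kraus_mxE conjCK.
Qed.

Lemma kraus_mx_uact r t s (U : 'M[C]_r) (V : 'M[C]_(r * t, s)) :
  kraus_mx (uact R r t s U V) = kraus_mx V *m U^t*.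
Proof.
apply/matrixP => + k; case/mxvec_indexP => x a.
rewrite kraus_mxE uactE rmorph_sum mxE; apply: eq_bigr => l _.
by rewrite rmorphM kraus_mxE !mxE mulrC.
Qed.

Lemma ptraceB_kraus r t s (V : 'M[C]_(r * t, s)) :
  ptraceB R s t (kraus_mx V *m (kraus_mx V)^t* ) = V^t* *m V.
Proof.
apply/matrixP => x y; rewrite !mxE sum_mxvec_index exchange_big /=.
apply: eq_bigr => a _; rewrite mxE; apply: eq_bigr => k _.
by rewrite !mxE !kraus_mxE conjCK.
Qed.

Lemma lin_indep_blocksP r t s (V : 'M[C]_(r * t, s)) :
  lin_indep_blocks R r t s V <-> \rank (kraus_mx V) = r.
Proof.
have kraus_comb (u : 'rV[C]_r) :
    u *m (kraus_mx V)^T = mxvec ((\sum_k (u 0 k)^* *: blk R r t s V k)^t* ).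
  apply/rowP => +; case/mxvec_indexP => x a; rewrite !mxE mxvecE !mxE summxE rmorph_sum.
  by apply: eq_bigr => k _; rewrite !mxE kraus_mxE rmorphM /= conjCK.
rewrite -mxrank_tr; split => [indep | /eqP/row_freeP free c comb0 k].
  apply/eqP/row_freeP => u; rewrite kraus_comb => /(congr1 vec_mx).
  rewrite mxvecK linear0 => /(congr1 (fun W => W^t* )); rewrite trmxCK.
  rewrite (_ : 0^t* = 0); last by rewrite trmx0 map_mx0.
  move=> /indep u0; apply/rowP => k; rewrite mxE.
  by apply/eqP; rewrite -conjC_eq0 u0.
have := free (\row_k (c k)^* ); rewrite kraus_comb.
under eq_bigr do rewrite mxE conjCK.
rewrite comb0 trmx0 map_mx0 linear0 => /(_ erefl)/rowP/(_ k); rewrite !mxE.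
by move/eqP; rewrite conjC_eq0 => /eqP.
Qed.

End Kraus.



Section Choi.
Variables (R : realType) (s t r : nat).
Local Notation C := R[i].
Implicit Types (V W : 'M[C]_(r * t, s)) (U : 'M[C]_r).

Lemma unitary_mxE U : unitary_mx R r U <-> U \is unitarymx.
Proof.
rewrite /unitary_mx adj_mxE; split=> [/mulmx1C UU | /unitarymxP/mulmx1C //].
exact/unitarymxP.
Qed.

Lemma unitary_mx1 : unitary_mx R r 1%:M.
Proof. by apply/unitary_mxE/unitarymxP; rewrite trmx1 map_mx1 mulmx1. Qed.

Lemma uact_mul U U' V : uact R r t s U (uact R r t s U' V) = uact R r t s (U *m U') V.
Proof.
by apply: (can_inj (@kraus_mxK _ _ _ _)); rewrite !kraus_mx_uact trmxC_mul mulmxA.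
Qed.

Lemma uact1 V : uact R r t s 1%:M V = V.
Proof.
apply: (can_inj (@kraus_mxK _ _ _ _)).
by rewrite kraus_mx_uact trmx1 map_mx1 mulmx1.
Qed.

Lemma orbit_uact (V W : Vsp R s t r) U : unitary_mx R r U ->
  set_val W = uact R r t s U (set_val V) -> Defs.orbit R s t r V = Defs.orbit R s t r W.
Proof.
rewrite unitary_mxE => U_unitary WUV.
apply/seteqP; split=> X [U' [/unitary_mxE U'_unitary XU'V]].
  exists (U' *m U^t* ); split; last by rewrite XU'V WUV uact_mul mulmxKtV.
  by apply/unitary_mxE; rewrite mul_unitarymx ?trmxC_unitary.
exists (U' *m U); split; last by rewrite XU'V WUV uact_mul.
by apply/unitary_mxE; rewrite mul_unitarymx.
Qed.

Definition choi V : 'M[C]_(s * t) := s%:R^-1 *: (kraus_mx V *m (kraus_mx V)^t* ).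

Lemma mxrank_choi V : \rank (choi V) = \rank (kraus_mx V).
Proof.
have [s0 | s_gt0] := posnP s.
  by rewrite (eq_mx_nrows0 (choi V) 0) ?(eq_mx_nrows0 (kraus_mx V) 0) ?mxrank0 ?s0.
by rewrite /choi eqmx_scale ?invr_eq0 ?pnatr_eq0 -?lt0n // mxrank_mulmx_trmxC.
Qed.

Lemma ptraceBZ (a : C) (M : 'M[C]_(s * t)) :
  ptraceB R s t (a *: M) = a *: ptraceB R s t M.
Proof.
by apply/matrixP => x y; rewrite !mxE mulr_sumr; apply: eq_bigr => b _; rewrite mxE.
Qed.

Lemma choi_Cset V : Vset R s t r V -> Cset R s t r (choi V).
Proof.
rewrite /Vset /Cset /= adj_mxE => -[VV indep]; split; last split.
- by apply: psd_mx_scale_gram; rewrite invr_ge0 ler0n.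
- by rewrite mxrank_choi; apply/lin_indep_blocksP.
- by rewrite ptraceBZ ptraceB_kraus VV scalemx1.
Qed.

Lemma choi_uact U V : unitary_mx R r U -> choi (uact R r t s U V) = choi V.
Proof.
move=> /unitary_mxE/unitarymxP UU; rewrite /choi kraus_mx_uact trmxC_mul trmxCK.
by rewrite mulmxA -(mulmxA _ (U^t* )) (mulmx1C UU) mulmx1.
Qed.

Lemma choi_inj_orbit V W : Vset R s t r V -> Vset R s t r W -> choi V = choi W ->
  exists2 U, unitary_mx R r U & W = uact R r t s U V.
Proof.
have [s0 _ _ _ | s_gt0] := posnP s.
  by exists 1%:M; [exact: unitary_mx1 | exact: eq_mx_ncols0].
have s_neq0 : (s%:R^-1 : C) != 0 by rewrite invr_eq0 pnatr_eq0 -lt0n.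
move=> [_ /lin_indep_blocksP rkV] [_ /lin_indep_blocksP rkW] /(scalerI s_neq0) KK.
have [U U_unitary KWU] := unitary_factor_mulmx_trmxC rkV rkW KK.
exists (U^t* ); first by apply/unitary_mxE; rewrite trmxC_unitary.
by apply: (can_inj (@kraus_mxK _ _ _ _)); rewrite kraus_mx_uact trmxCK KWU.
Qed.

Lemma choi_surj M : Cset R s t r M -> exists2 V, Vset R s t r V & choi V = M.
Proof.
have [s0 [_ [rkM _]] | s_gt0] := posnP s.
  have r0 : r = 0%N by rewrite -rkM (eq_mx_nrows0 M 0) ?mxrank0 ?s0.
  exists 0; last by apply: eq_mx_nrows0; rewrite s0.
  split; first exact: eq_mx_nrows0.
  by move=> c _ k; have := ltn_ord k; rewrite {2}r0.
move=> [/psd_mx_factor[Z0 ->] [rkM ptM]].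
rewrite mxrank_mulmx_trmxC in rkM; have [Z Z0Z] := mulmx_trmxC_factor rkM.
have s_neq0 : (s%:R : C) != 0 by rewrite pnatr_eq0 -lt0n.
pose a : C := sqrtC s%:R.
have aa : a * a^* = s%:R by rewrite geC0_conj ?sqrtC_ge0 ?ler0n // -expr2 sqrtCK.
have KK : (a *: Z) *m (a *: Z)^t* = s%:R *: (Z0 *m Z0^t* ).
  by rewrite Z0Z linearZ /= map_mxZ -scalemxAl -scalemxAr scalerA aa.
exists (kraus_mx (a *: Z)); last by rewrite /choi kraus_mxK KK scalerA mulVf // scale1r.
split.
  by rewrite adj_mxE -ptraceB_kraus kraus_mxK KK ptraceBZ ptM scale_scalar_mx mulfV.
apply/lin_indep_blocksP; rewrite kraus_mxK eqmx_scale ?sqrtC_eq0 //.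
by rewrite -mxrank_mulmx_trmxC -Z0Z mxrank_mulmx_trmxC.
Qed.

End Choi.

Section MatrixContinuity.
Variables (T : topologicalType) (K : numFieldType).

Lemma continuous_mx (U : topologicalType) m n (f : T -> 'M[U]_(m, n)) :
  (forall i j, continuous (fun x => f x i j)) -> continuous f.
Proof.
move=> f_cont x A [P P_nbhs PA]; rewrite nbhs_simpl /=.
have : \forall y \near x, forall ij : 'I_m * 'I_n, P ij.1 ij.2 (f y ij.1 ij.2).
  by apply: filter_forall => -[i j]; exact: f_cont.
by apply: filterS => y Py; apply: PA => i j; exact: (Py (i, j)).
Qed.

Lemma continuous_mx_entry m n (f : T -> 'M[K]_(m, n)) i j :
  continuous f -> continuous (fun x => f x i j).
Proof.
move=> f_cont x; apply: (@continuous_comp _ _ _ f (fun M : 'M[K]_(m, n) => M i j)).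
  exact: f_cont.
exact: coord_continuous.
Qed.

Lemma continuous_mulmx m n p (f : T -> 'M[K]_(m, n)) (g : T -> 'M[K]_(n, p)) :
  continuous f -> continuous g -> continuous (fun x => f x *m g x).
Proof.
move=> f_cont g_cont; apply: continuous_mx => i j.
rewrite (_ : (fun x => _) = (fun x => \sum_k f x i k * g x k j)); last first.
  by apply: funext => x; rewrite mxE.
apply: (continuous_big add_continuous) => k _ x.
by apply: continuousM; apply: continuous_mx_entry.
Qed.

Lemma continuous_scalemx m n (a : K) (f : T -> 'M[K]_(m, n)) :
  continuous f -> continuous (fun x => a *: f x).
Proof.
move=> f_cont; apply: continuous_mx => i j.
rewrite (_ : (fun x => _) = (fun x => a * f x i j)); last first.
  by apply: funext => x; rewrite mxE.
by move=> x; apply: continuousM; [exact: cst_continuous | exact: continuous_mx_entry].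
Qed.

End MatrixContinuity.

Lemma compact_mx_box (K : numFieldType) m n (A : set K) :
  compact A -> compact [set X : 'M[K]_(m, n) | forall i j, A (X i j)].
Proof.
move=> A_compact.
have vec_cont : continuous (@vec_mx K m n).
  apply: continuous_mx => i j.
  rewrite (_ : (fun v => _) = (fun v : 'rV[K]_(m * n) => v 0 (mxvec_index i j))).
    by move=> v; apply: coord_continuous.
  by apply: funext => v; rewrite mxE.
have := @rV_compact _ (m * n) (fun=> A) (fun=> A_compact).
move=> /(continuous_compact (continuous_subspaceT vec_cont)).
congr compact; apply/seteqP; split => [_ [v Av <-] i j | X AX].
  by rewrite mxE; exact: Av.
exists (mxvec X); last exact: mxvecK.
by case/mxvec_indexP => i j; rewrite mxvecE.
Qed.

Section ComplexMatrixTopology.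
Variable R : realType.
Local Notation C := R[i].

Lemma continuous_conjC : continuous (fun z : C => z^* ).
Proof.
move=> z; apply/(@cvgrPdist_lt _ _ _ (nbhs z) (nbhs_filter z)) => e e_gt0; near=> w.
by rewrite -rmorphB norm_conjC; near: w; exact: cvgr_dist_lt.
Unshelve. all: by end_near. Qed.

Lemma continuous_trmxC (T : topologicalType) m n (f : T -> 'M[C]_(m, n)) :
  continuous f -> continuous (fun x => (f x)^t* ).
Proof.
move=> f_cont; apply: continuous_mx => i j.
rewrite (_ : (fun x => _) = (fun x => (f x j i)^* )); last first.
  by apply: funext => x; rewrite !mxE.
move=> x; apply: (@continuous_comp _ _ _ (fun x => f x j i)).
  exact: continuous_mx_entry.
exact: continuous_conjC.
Qed.

Lemma continuous_kraus_mx r t s : continuous (@kraus_mx R r t s).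
Proof.
apply: continuous_mx => + k; case/mxvec_indexP => x a.
rewrite (_ : (fun V => _) = (fun V : 'M[C]_(r * t, s) => (V (mxvec_index k a) x)^* )).
  move=> V; apply: (@continuous_comp _ _ _ (fun V : 'M[C]_(r * t, s) => V _ x)).
    exact: coord_continuous.
  exact: continuous_conjC.
by apply: funext => V; rewrite kraus_mxE.
Qed.

Lemma continuous_choi s t r : continuous (@choi R s t r).
Proof.
apply: continuous_scalemx; apply: continuous_mulmx; first exact: continuous_kraus_mx.
by apply: continuous_trmxC; exact: continuous_kraus_mx.
Qed.

Lemma continuous_gram m n : continuous (fun X : 'M[C]_(m, n) => X^t* *m X).
Proof. by apply: continuous_mulmx; [apply: continuous_trmxC |]; move=> X. Qed.

Lemma normc_real (a : R) : `|a%:C| = `|a|%:C :> C.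
Proof. by rewrite normc_def /= expr0n /= addr0 sqrtr_sqr. Qed.

Lemma continuous_real_complex : continuous (fun a : R => a%:C : C).
Proof.
move=> a; apply/(@cvgrPdist_lt _ _ _ _ (nbhs_filter a)) => -[e e'].
rewrite ltcE /= => /andP[/eqP-> e_gt0]; near=> b.
rewrite -rmorphB normc_real ltcR.
by near: b; exact: (@cvgr_dist_lt _ _ _ (nbhs a) _ id a (@cvg_id _ (nbhs a))).
Unshelve. all: by end_near. Qed.

Lemma continuous_complex_pair : continuous (fun p : R * R => (p.1 +i* p.2)%C : C).
Proof.
rewrite (_ : (fun p => _) = (fun p : R * R => p.1%:C + 'i%C * p.2%:C)).
  move=> p; apply: (@continuousD _ C _ (fun p : R * R => p.1%:C) (fun p => 'i%C * p.2%:C)).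
    apply: (@continuous_comp _ _ _ fst (fun a : R => a%:C : C)); first exact: cvg_fst.
    exact: continuous_real_complex.
  apply: (@continuousM C _ (fun=> 'i%C) (fun p : R * R => p.2%:C)).
    exact: cst_continuous.
  apply: (@continuous_comp _ _ _ snd (fun a : R => a%:C : C)); first exact: cvg_snd.
  exact: continuous_real_complex.
by apply: funext => -[a b]; simpc.
Qed.

Lemma compact_orthonormal m n : compact [set X : 'M[C]_(m, n) | X^t* *m X = 1%:M].
Proof.
pose square := [set (p.1 +i* p.2)%C | p in `[-1, 1] `*` `[-1, 1]] : set C.
have square_compact : compact square.
  apply: continuous_compact; last by apply: compact_setX; exact: segment_compact.
  exact/continuous_subspaceT/continuous_complex_pair.
apply: (subclosed_compact _ (@compact_mx_box C m n square square_compact)).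
  rewrite (_ : [set X | _] = (fun X : 'M[C]_(m, n) => X^t* *m X) @^-1` [set 1%:M]) //.
  apply: preimage_closed => [X _|]; first exact: continuous_gram.
  exact/accessible_closed_set1/hausdorff_accessible/norm_hausdorff.
move=> X XX i j; have := congr1 (fun M : 'M[C]_n => M j j) XX.
rewrite /= !mxE eqxx mulr1n (bigD1 i) //= !mxE => XXjj.
have : (X i j)^* * X i j <= 1.
  by rewrite -XXjj lerDl; apply: sumr_ge0 => k _; rewrite !mxE mulrC mul_conjC_ge0.
case: (X i j) => a b; rewrite /= lecE /= !mulNr opprK => /andP[_ ab_le1].
by exists (a, b); split; rewrite /= in_itv /=; apply/andP; split; nra.
Qed.

End ComplexMatrixTopology.

Lemma nbhs_fibres_subset (T Y : topologicalType) (K W : set T) (p : T -> Y) (y : Y) :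
  hausdorff_space Y -> compact K -> continuous p -> open W ->
  (forall x, K x -> p x = y -> W x) ->
  \forall y' \near y, forall x, K x -> p x = y' -> W x.
Proof.
move=> Y_haus K_compact p_cont W_open Wy.
have pKW_compact : compact (p @` (K `&` ~` W)).
  apply: continuous_compact; first exact: continuous_subspaceT.
  exact: compact_closedI K_compact (open_closedC W_open).
have : nbhs y (~` (p @` (K `&` ~` W))).
  apply: open_nbhs_nbhs; split; last by move=> [x [Kx nWx] pxy]; exact/nWx/Wy.
  by apply: closed_openC; exact: compact_closed.
apply: filterS => y' y'_out x Kx pxy'; apply: contrapT => nWx.
by apply: y'_out; exists x.
Qed.

Section OrbitSpace.
Variables (R : realType) (s t r : nat).
Local Notation C := R[i].
Local Notation VS := (Vsp R s t r).
Local Notation CS := (Csp R s t r).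
Local Notation OS := (orbit_space R s t r).

Lemma same_orbitE (V W : VS) :
  same_orbit R s t r V W = (choi (set_val V) == choi (set_val W)).
Proof.
apply/asboolP/eqP => [VW | VW].
  have : Defs.orbit R s t r W W.
    by exists 1%:M; rewrite uact1; split; first exact: unitary_mx1.
  by rewrite -VW => -[U [U_unitary ->]]; rewrite choi_uact.
have [U U_unitary WUV] := choi_inj_orbit (set_valP V) (set_valP W) VW.
exact: orbit_uact U_unitary WUV.
Qed.

Lemma pi_orbit_eq (V W : VS) :
  \pi_OS V = \pi_OS W <-> choi (set_val V) = choi (set_val W).
Proof.
split => [/eqquotP | VW]; first by rewrite /= same_orbitE => /eqP.
by apply/eqquotP; rewrite /= same_orbitE VW.
Qed.

Definition choi_point (V : VS) : CS := SigSub (mem_set (choi_Cset (set_valP V))).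

Definition orbit_rep (c : CS) : VS :=
  let: exist2 V V_in _ := cid2 (choi_surj (set_valP c)) in SigSub (mem_set V_in).

Lemma choi_orbit_rep (c : CS) : choi (set_val (orbit_rep c)) = set_val c.
Proof. by rewrite /orbit_rep; case: cid2. Qed.

Definition orbit_to_choi (q : OS) : CS := choi_point (repr q).

Definition choi_to_orbit (c : CS) : OS := \pi_OS (orbit_rep c).

Lemma orbit_to_choiK : cancel orbit_to_choi choi_to_orbit.
Proof.
move=> q; rewrite /choi_to_orbit -[RHS]reprK; apply/pi_orbit_eq.
exact: choi_orbit_rep.
Qed.

Lemma choi_to_orbitK : cancel choi_to_orbit orbit_to_choi.
Proof.
move=> c; apply: val_inj.
suff : choi (set_val (repr (choi_to_orbit c))) = set_val c by [].
by rewrite -choi_orbit_rep; apply/pi_orbit_eq; rewrite reprK.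
Qed.

Lemma continuous_orbit_to_choi : continuous orbit_to_choi.
Proof.
apply: (@repr_comp_continuous _ _ _ choi_point).
  apply: continuous_comp_initial => V.
  apply: (@continuous_comp _ _ _ set_val (@choi R s t r)); first exact: initial_continuous.
  exact: continuous_choi.
by move=> V W /eqP/pi_orbit_eq VW; apply/eqP/val_inj.
Qed.

Lemma Vset_of_choi (X : 'M[C]_(r * t, s)) :
  X^t* *m X = 1%:M -> \rank (choi X) = r -> Vset R s t r X.
Proof. by rewrite mxrank_choi => XX /lin_indep_blocksP; split; rewrite ?adj_mxE. Qed.

Lemma continuous_choi_to_orbit : continuous choi_to_orbit.
Proof.
move=> c A; rewrite nbhs_simpl (@nbhsE OS) => -[B [B_open Bc] BA].
move: B_open => [W W_open WB].
(* The fibre of [choi] over [c] inside the compact set of isometries lies in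
   [W], hence so do the fibres over all points near [c]. *)
have Wc : forall X, X^t* *m X = 1%:M -> choi X = set_val c -> W X.
  move=> X XX Xc; have X_in : Vset R s t r X.
    by apply: Vset_of_choi => //; rewrite Xc; case: (set_valP c) => _ [].
  have : (\pi_OS @^-1` B) (SigSub (mem_set X_in)).
    by rewrite /preimage /= (pi_orbit_eq _ (orbit_rep c)).2 // choi_orbit_rep.
  by rewrite -WB.
have := nbhs_fibres_subset (@norm_hausdorff _ _) (@compact_orthonormal R _ _)
  (@continuous_choi R s t r) W_open Wc.
have val_cont : continuous (set_val : CS -> 'M[C]_(s * t)) by exact: initial_continuous.
move=> /(val_cont c) near_c.
apply: (@filterS _ (nbhs c) (nbhs_filter c) _ _ _ near_c) => c' Wc'.
apply: BA; suff : (set_val @^-1` W) (orbit_rep c') by rewrite WB.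
by apply: Wc'; [case: (set_valP (orbit_rep c')); rewrite adj_mxE | exact: choi_orbit_rep].
Qed.

End OrbitSpace.

Theorem lemma8 (R : realType) (s t r : nat) :
  (s <= r * t)%N -> (r <= s * t)%N ->
  homeomorphic (orbit_space R s t r) (Csp R s t r).
Proof.
move=> _ _; exists (@orbit_to_choi R s t r), (@choi_to_orbit R s t r); split.
- exact: orbit_to_choiK.
- exact: choi_to_orbitK.
- exact: continuous_orbit_to_choi.
- exact: continuous_choi_to_orbit.
Qed.
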